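(* Let $\mathcal{C}$ be a pre-Hilbert $*$-category and $A$ an object of $\mathcal{C}$. Then: (1) $\mathcal{C}(A,A)$, with addition from the unique enrichment of $\mathcal{C}$ in abelian groups, multiplication given by composition, involution given by the restriction of the involution of $\mathcal{C}$, and positive cone $\mathcal{C}(A,A)_+ = \{x^*x : x\in\mathcal{C}(A,X) \text{ for some object } X\}$, is an ordered $*$-ring; (2) for each object $X$, $\mathcal{C}(A,X)$, with addition from the enrichment and right scalar multiplication by $\mathcal{C}(A,A)$ given by composition, is an inner product right $\mathcal{C}(A,A)$-module with inner product $\langle x,y\rangle = x^*y$; (3) for each morphism $f\colon X\to Y$ of $\mathcal{C}$, the map $\mathcal{C}(A,f)\colon \mathcal{C}(A,X)\to\mathcal{C}(A,Y)$, $x\mapsto fx$, is adjointable with adjoint $\mathcal{C}(A,f^* )$. Consequently the hom-functor $\mathcal{C}(A,-)$ factors through the forgetful functor $\mathbf{InnerProd}_{\mathcal{C}(A,A)}\to\mathbf{Set}$ via a $*$-functor $\mathcal{C}\to\mathbf{InnerProd}_{\mathcal{C}(A,A)}$.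
   Context: A $*$-category is a category with a choice of $f^*\colon Y\to X$ for each $f\colon X\to Y$ such that $1^*=1$, $(gf)^*=f^*g^*$, $(f^* )^*=f$; a $*$-functor is a functor $F$ between $*$-categories with $F(f^* )=(Ff)^*$. A pre-Hilbert $*$-category is a $*$-category with (R1) a zero object, (R2) orthonormal biproducts of all pairs of objects (biproducts $(X,s_1,r_1,s_2,r_2)$ with $r_k=s_k^*$), (R3) an isometric kernel (kernel $m$ with $m^*m=1$) for every morphism, and (R4) every diagonal $\Delta\colon X\to X\oplus X$ a kernel of some morphism; such a category is additive. A $*$-ring is a ring $R$ with a map $r\mapsto r^*$ satisfying $1^*=1$, $(sr)^*=r^*s^*$, $(r^* )^*=r$, $(r+s)^*=r^*+s^*$; it is anisotropic if $r^*r=0$ implies $r=0$. $R_{\mathrm{sa}}$ denotes the set of Hermitian elements ($a^*=a$). A positive cone on $R$ is a subset $P\subseteq R_{\mathrm{sa}}$ with $1\in P$, $P+P\subseteq P$, $r^*Pr\subseteq P$ for all $r\in R$, and $P\cap -P=\{0\}$. An ordered $*$-ring is an anisotropic $*$-ring with a positive cone $R_+$ (equivalently the order $a\le b$ iff $b-a\in R_+$). For an ordered $*$-ring $R$ and right $R$-module $X$, an inner product is a map $\langle-,-\rangle\colon X\times X\to R$ with $\langle x,yr+z\rangle=\langle x,y\rangle r+\langle x,z\rangle$, $\langle x,y\rangle^*=\langle y,x\rangle$, $\langle x,x\rangle\in R_+$, and $\langle x,x\rangle=0\Rightarrow x=0$. A function $f\colon X\to Y$ between inner product $R$-modules is adjointable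 if there is $f^*\colon Y\to X$ with $\langle f^*y,x\rangle=\langle y,fx\rangle$ for all $x,y$. $\mathbf{InnerProd}_R$ is the $*$-category of inner product $R$-modules and adjointable maps. *)

From Stdlib Require Import ClassicalEpsilon.

Record Category := {
  Obj : Type;
  Hom : Obj -> Obj -> Type;
  idm : forall X, Hom X X;
  comp : forall X Y Z, Hom Y Z -> Hom X Y -> Hom X Z;
  comp_id_l : forall X Y (f : Hom X Y), comp X Y Y (idm Y) f = f;
  comp_id_r : forall X Y (f : Hom X Y), comp X X Y f (idm X) = f;
  comp_assoc : forall W X Y Z (h : Hom Y Z) (g : Hom X Y) (f : Hom W X),
      comp W Y Z h (comp W X Y g f) = comp W X Z (comp X Y Z h g) f
}.
Arguments idm {C} X : rename.
Arguments comp {C X Y Z} g f : rename.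
Arguments Hom {C} X Y : rename.
Notation "g ∘ f" := (comp g f) (at level 40, left associativity).

Record StarCategory := {
  sc_cat :> Category;
  star : forall (X Y : Obj sc_cat), Hom X Y -> Hom Y X;
  star_id : forall X, star X X (idm X) = idm X;
  star_comp : forall X Y Z (g : Hom Y Z) (f : Hom X Y),
      star X Z (g ∘ f) = star X Y f ∘ star Y Z g;
  star_star : forall X Y (f : Hom X Y), star Y X (star X Y f) = f
}.
Arguments star {s X Y} f : rename.

Set Implicit Arguments.
Unset Strict Implicit.

Definition is_zero_object (C : Category) (Z : Obj C) : Prop :=
  (forall X : Obj C, exists f : Hom X Z, forall g : Hom X Z, g = f) /\
  (forall X : Obj C, exists f : Hom Z X, forall g : Hom Z X, g = f).

Definition zmor (C : Category) (Z : Obj C) (HZ : is_zero_object Z)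
  (X Y : Obj C) : Hom X Y :=
  proj1_sig (constructive_indefinite_description _ (proj2 HZ Y))
  ∘ proj1_sig (constructive_indefinite_description _ (proj1 HZ X)).

Definition is_biproduct (C : Category) (z : forall X Y : Obj C, Hom X Y)
  (X1 X2 B : Obj C) (s1 : Hom X1 B) (r1 : Hom B X1)
  (s2 : Hom X2 B) (r2 : Hom B X2) : Prop :=
  r1 ∘ s1 = idm X1 /\ r2 ∘ s2 = idm X2 /\
  r2 ∘ s1 = z X1 X2 /\ r1 ∘ s2 = z X2 X1 /\
  (forall W (f1 : Hom W X1) (f2 : Hom W X2),
      exists h : Hom W B, r1 ∘ h = f1 /\ r2 ∘ h = f2 /\
        forall h' : Hom W B, r1 ∘ h' = f1 -> r2 ∘ h' = f2 -> h' = h) /\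
  (forall W (g1 : Hom X1 W) (g2 : Hom X2 W),
      exists h : Hom B W, h ∘ s1 = g1 /\ h ∘ s2 = g2 /\
        forall h' : Hom B W, h' ∘ s1 = g1 -> h' ∘ s2 = g2 -> h' = h).

Definition is_orth_biproduct (C : StarCategory) (z : forall X Y : Obj C, Hom X Y)
  (X1 X2 B : Obj C) (s1 : Hom X1 B) (r1 : Hom B X1)
  (s2 : Hom X2 B) (r2 : Hom B X2) : Prop :=
  is_biproduct z s1 r1 s2 r2 /\ r1 = star s1 /\ r2 = star s2.

Definition is_kernel (C : Category) (z : forall X Y : Obj C, Hom X Y)
  (X Y K : Obj C) (f : Hom X Y) (m : Hom K X) : Prop :=
  f ∘ m = z K Y /\
  forall W (g : Hom W X), f ∘ g = z W Y ->
    exists h : Hom W K, m ∘ h = g /\ forall h' : Hom W K, m ∘ h' = g -> h' = h.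

Record PreHilbert := {
  ph_sc :> StarCategory;
  ph_zero : Obj ph_sc;
  ph_zero_is : is_zero_object ph_zero;
  ph_biprod : forall X1 X2 : Obj ph_sc,
    exists B s1 r1 s2 r2,
      @is_orth_biproduct ph_sc (zmor ph_zero_is) X1 X2 B s1 r1 s2 r2;
  ph_kernel : forall (X Y : Obj ph_sc) (f : Hom X Y),
    exists K (m : Hom K X),
      is_kernel (zmor ph_zero_is) f m /\ star m ∘ m = idm K;
  ph_diag : forall (X B : Obj ph_sc) s1 r1 s2 r2,
    @is_orth_biproduct ph_sc (zmor ph_zero_is) X X B s1 r1 s2 r2 ->
    forall d : Hom X B, r1 ∘ d = idm X -> r2 ∘ d = idm X ->
      exists (Z : Obj ph_sc) (g : Hom B Z), is_kernel (zmor ph_zero_is) g d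
}.

Definition phz (C : PreHilbert) (X Y : Obj C) : Hom X Y :=
  zmor (ph_zero_is C) X Y.

(* h = f + g in the (unique) enrichment in abelian groups:
   h = [1,1] ∘ <f,g> for a biproduct Y ⊕ Y *)
Definition is_sum (C : PreHilbert) (X Y : Obj C) (f g h : Hom X Y) : Prop :=
  exists B (s1 : Hom Y B) r1 s2 r2,
    is_biproduct (@phz C) s1 r1 s2 r2 /\
    exists (p : Hom X B) (c : Hom B Y),
      r1 ∘ p = f /\ r2 ∘ p = g /\ c ∘ s1 = idm Y /\ c ∘ s2 = idm Y /\ h = c ∘ p.

Definition phadd (C : PreHilbert) (X Y : Obj C) (f g : Hom X Y) : Hom X Y :=
  epsilon (inhabits f) (fun h => is_sum f g h).

Definition is_abelian_group (M : Type) (zero : M) (add : M -> M -> M) : Prop :=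
  (forall x y z, add x (add y z) = add (add x y) z) /\
  (forall x y, add x y = add y x) /\
  (forall x, add zero x = x) /\
  (forall x, exists y, add x y = zero).

Definition is_star_ring (R : Type) (zero one : R) (add mul : R -> R -> R)
  (st : R -> R) : Prop :=
  is_abelian_group zero add /\
  (forall x y z, mul x (mul y z) = mul (mul x y) z) /\
  (forall x, mul one x = x) /\ (forall x, mul x one = x) /\
  (forall x y z, mul x (add y z) = add (mul x y) (mul x z)) /\
  (forall x y z, mul (add x y) z = add (mul x z) (mul y z)) /\
  st one = one /\
  (forall r s, st (mul s r) = mul (st r) (st s)) /\
  (forall r, st (st r) = r) /\
  (forall r s, st (add r s) = add (st r) (st s)).

Definition is_anisotropic (R : Type) (zero : R) (mul : R -> R -> R) (st : R -> R) :=
  forall r, mul (st r) r = zero -> r = zero.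

(* P is a positive cone; "P ∩ -P = {0}" is written: a, b ∈ P, a + b = 0 ⇒ a = 0 *)
Definition is_positive_cone (R : Type) (zero one : R) (add mul : R -> R -> R)
  (st : R -> R) (P : R -> Prop) : Prop :=
  (forall a, P a -> st a = a) /\
  P one /\
  (forall a b, P a -> P b -> P (add a b)) /\
  (forall r a, P a -> P (mul (mul (st r) a) r)) /\
  (forall a b, P a -> P b -> add a b = zero -> a = zero).

Definition is_ordered_star_ring (R : Type) (zero one : R) (add mul : R -> R -> R)
  (st : R -> R) (P : R -> Prop) : Prop :=
  is_star_ring zero one add mul st /\ is_anisotropic zero mul st /\
  is_positive_cone zero one add mul st P.

Definition is_right_module (R : Type) (one : R) (addR mulR : R -> R -> R)
  (M : Type) (zero : M) (add : M -> M -> M) (act : M -> R -> M) : Prop :=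
  is_abelian_group zero add /\
  (forall x y r, act (add x y) r = add (act x r) (act y r)) /\
  (forall x r s, act x (addR r s) = add (act x r) (act x s)) /\
  (forall x r s, act x (mulR r s) = act (act x r) s) /\
  (forall x, act x one = x).

Definition is_inner_product (R : Type) (zeroR : R) (addR mulR : R -> R -> R)
  (st : R -> R) (P : R -> Prop)
  (M : Type) (zero : M) (add : M -> M -> M) (act : M -> R -> M)
  (ip : M -> M -> R) : Prop :=
  (forall x y z r, ip x (add (act y r) z) = addR (mulR (ip x y) r) (ip x z)) /\
  (forall x y, st (ip x y) = ip y x) /\
  (forall x, P (ip x x)) /\
  (forall x, ip x x = zeroR -> x = zero).

Definition is_inner_product_module (R : Type) (zeroR oneR : R)
  (addR mulR : R -> R -> R) (st : R -> R) (P : R -> Prop)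
  (M : Type) (zero : M) (add : M -> M -> M) (act : M -> R -> M)
  (ip : M -> M -> R) : Prop :=
  is_right_module oneR addR mulR zero add act /\
  is_inner_product zeroR addR mulR st P zero add act ip.

Definition is_adjoint (R M N : Type) (ipM : M -> M -> R) (ipN : N -> N -> R)
  (F : M -> N) (G : N -> M) : Prop :=
  forall (y : N) (x : M), ipM (G y) x = ipN y (F x).

(* The sum of [f, g : X -> Y] is [∇ ∘ <f, g>] through any biproduct [Y ⊕ Y]; it does
   not depend on the biproduct, and [[a, b] ∘ <u, v> = a u + b v].  Hence composition
   is bilinear, and the interchange law [(a + b) + (c + d) = (a + c) + (b + d)] gives
   commutativity and associativity (Eckmann-Hilton).  Orthonormal biproducts make [*]
   additive and give [x^* x + y^* y = w^* w] for [w = <x, y>], so hermitian squares are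
   closed under sums; anisotropy comes from isometric kernels.  Negatives come from
   (R4): the components [k1, k2] of an isometric kernel [k] of [Δ^*] satisfy
   [k1 + k2 = 0] and [k1^* k1 = k2^* k2], and [k1^*] is monic because [Δ] is a kernel;
   so [t = k1^* + k1^*] is a right inverse of [k1] and [k2 t] is [-1]. *)

From Stdlib Require Import ClassicalEpsilon.

Set Implicit Arguments.
Unset Strict Implicit.

Section ZeroObject.

Variables (C : Category) (Z : Obj C) (HZ : is_zero_object Z).

Lemma zmor_factor (X Y : Obj C) (g : Hom X Z) (h : Hom Z Y) : zmor HZ X Y = h ∘ g.
Proof.
  unfold zmor.
  destruct (constructive_indefinite_description _ (proj2 HZ Y)) as [hY HY].
  destruct (constructive_indefinite_description _ (proj1 HZ X)) as [gX HX].
  simpl. rewrite (HY h), (HX g). reflexivity.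
Qed.

Lemma zmor_comp (X Y W : Obj C) (f : Hom W X) : zmor HZ X Y ∘ f = zmor HZ W Y.
Proof.
  destruct (proj1 HZ X) as [g _]. destruct (proj2 HZ Y) as [h _].
  rewrite (zmor_factor g h), <- comp_assoc. symmetry. apply zmor_factor.
Qed.

Lemma comp_zmor (X Y W : Obj C) (f : Hom Y W) : f ∘ zmor HZ X Y = zmor HZ X W.
Proof.
  destruct (proj1 HZ X) as [g _]. destruct (proj2 HZ Y) as [h _].
  rewrite (zmor_factor g h), comp_assoc. symmetry. apply zmor_factor.
Qed.

End ZeroObject.

Lemma star_zmor (C : StarCategory) (Z : Obj C) (HZ : is_zero_object Z) (X Y : Obj C) :
  star (zmor HZ X Y) = zmor HZ Y X.
Proof.
  destruct (proj1 HZ X) as [g _]. destruct (proj2 HZ Y) as [h _].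
  rewrite (zmor_factor HZ g h), star_comp. symmetry. apply zmor_factor.
Qed.

Section Biproduct.

Variables (C : Category) (z : forall X Y : Obj C, Hom X Y).
Variables (X1 X2 B : Obj C) (s1 : Hom X1 B) (r1 : Hom B X1) (s2 : Hom X2 B) (r2 : Hom B X2).
Hypothesis Hbp : is_biproduct z s1 r1 s2 r2.

Lemma biprod_pair (W : Obj C) (f1 : Hom W X1) (f2 : Hom W X2) :
  exists h, r1 ∘ h = f1 /\ r2 ∘ h = f2.
Proof.
  destruct Hbp as (_&_&_&_&Hpair&_).
  destruct (Hpair W f1 f2) as [h [H1 [H2 _]]]. eauto.
Qed.

Lemma biprod_copair (W : Obj C) (g1 : Hom X1 W) (g2 : Hom X2 W) :
  exists h, h ∘ s1 = g1 /\ h ∘ s2 = g2.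
Proof.
  destruct Hbp as (_&_&_&_&_&Hcopair).
  destruct (Hcopair W g1 g2) as [h [H1 [H2 _]]]. eauto.
Qed.

Lemma biprod_proj_ext (W : Obj C) (h h' : Hom W B) :
  r1 ∘ h = r1 ∘ h' -> r2 ∘ h = r2 ∘ h' -> h = h'.
Proof.
  intros E1 E2. destruct Hbp as (_&_&_&_&Hpair&_).
  destruct (Hpair W (r1 ∘ h) (r2 ∘ h)) as [k [_ [_ Hk]]].
  rewrite (Hk h), (Hk h'); auto.
Qed.

Lemma biprod_inj_ext (W : Obj C) (h h' : Hom B W) :
  h ∘ s1 = h' ∘ s1 -> h ∘ s2 = h' ∘ s2 -> h = h'.
Proof.
  intros E1 E2. destruct Hbp as (_&_&_&_&_&Hcopair).
  destruct (Hcopair W (h ∘ s1) (h ∘ s2)) as [k [_ [_ Hk]]].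
  rewrite (Hk h), (Hk h'); auto.
Qed.

End Biproduct.

Lemma kernel_factor (C : Category) (z : forall X Y : Obj C, Hom X Y) (X Y K W : Obj C)
    (f : Hom X Y) (m : Hom K X) (u : Hom W X) :
  is_kernel z f m -> f ∘ u = z W Y -> exists h, m ∘ h = u.
Proof. intros [_ Hm] Hu. destruct (Hm W u Hu) as [h [Hh _]]. eauto. Qed.

Section Enrichment.

Variable C : PreHilbert.

Lemma phz_comp (X Y W : Obj C) (f : Hom W X) : phz X Y ∘ f = phz W Y.
Proof. apply zmor_comp. Qed.

Lemma comp_phz (X Y W : Obj C) (f : Hom Y W) : f ∘ phz X Y = phz X W.
Proof. apply comp_zmor. Qed.

Lemma star_phz (X Y : Obj C) : star (phz X Y) = phz Y X.
Proof. apply star_zmor. Qed.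

Lemma is_sum_unique (X Y : Obj C) (f g h h' : Hom X Y) :
  is_sum f g h -> is_sum f g h' -> h = h'.
Proof.
  intros (B&s1&r1&s2&r2&Hbp&p&c&Hp1&Hp2&Hc1&Hc2&->).
  intros (B'&s1'&r1'&s2'&r2'&Hbp'&p'&c'&Hp1'&Hp2'&Hc1'&Hc2'&->).
  pose proof Hbp as (E11&E22&E21&E12&_).
  pose proof Hbp' as (E11'&E22'&E21'&E12'&_).
  destruct (biprod_pair Hbp' r1 r2) as [phi [F1 F2]].
  assert (Hs1 : phi ∘ s1 = s1').
  { apply (biprod_proj_ext Hbp'); rewrite comp_assoc;
      [rewrite F1, E11, E11' | rewrite F2, E21, E21']; reflexivity. }
  assert (Hs2 : phi ∘ s2 = s2').
  { apply (biprod_proj_ext Hbp'); rewrite comp_assoc;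
      [rewrite F1, E12, E12' | rewrite F2, E22, E22']; reflexivity. }
  assert (Hc : c' ∘ phi = c).
  { apply (biprod_inj_ext Hbp); rewrite <- comp_assoc;
      [rewrite Hs1, Hc1, Hc1' | rewrite Hs2, Hc2, Hc2']; reflexivity. }
  assert (Hp : p' = phi ∘ p).
  { apply (biprod_proj_ext Hbp'); rewrite comp_assoc;
      [rewrite F1, Hp1, Hp1' | rewrite F2, Hp2, Hp2']; reflexivity. }
  rewrite Hp, comp_assoc, Hc. reflexivity.
Qed.

Lemma phadd_codiag (X Y B : Obj C) (s1 : Hom Y B) r1 s2 r2 :
  is_biproduct (@phz C) s1 r1 s2 r2 ->
  forall (f g : Hom X Y) (p : Hom X B) (c : Hom B Y),
  r1 ∘ p = f -> r2 ∘ p = g -> c ∘ s1 = idm Y -> c ∘ s2 = idm Y -> phadd f g = c ∘ p.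
Proof.
  intros Hbp f g p c Hp1 Hp2 Hc1 Hc2.
  assert (Hsum : is_sum f g (c ∘ p)) by (exists B, s1, r1, s2, r2; split; eauto 10).
  refine (is_sum_unique _ Hsum).
  unfold phadd. apply epsilon_spec. eauto.
Qed.

(* [q = ∇ ∘ M] with [M = <a r1, b r2>] the direct sum of [a] and [b]. *)
Lemma phadd_matrix (X1 X2 B W V : Obj C) (s1 : Hom X1 B) r1 (s2 : Hom X2 B) r2 :
  is_biproduct (@phz C) s1 r1 s2 r2 ->
  forall (a : Hom X1 V) (b : Hom X2 V) (u : Hom W X1) (v : Hom W X2)
         (q : Hom B V) (p : Hom W B),
  q ∘ s1 = a -> q ∘ s2 = b -> r1 ∘ p = u -> r2 ∘ p = v ->
  phadd (a ∘ u) (b ∘ v) = q ∘ p.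
Proof.
  intros Hbp a b u v q p Hq1 Hq2 Hp1 Hp2.
  pose proof Hbp as (E11&E22&E21&E12&_).
  destruct (ph_biprod V V) as (B'&s1'&r1'&s2'&r2'&[Hbp' _]).
  pose proof Hbp' as (E11'&E22'&E21'&E12'&_).
  destruct (biprod_pair Hbp' (a ∘ r1) (b ∘ r2)) as [M [M1 M2]].
  destruct (biprod_copair Hbp' (idm V) (idm V)) as [c [Hc1 Hc2]].
  assert (Hq : c ∘ M = q).
  { apply (biprod_inj_ext Hbp).
    - assert (HM : M ∘ s1 = s1' ∘ a).
      { apply (biprod_proj_ext Hbp'); rewrite !comp_assoc;
          [rewrite M1, E11' | rewrite M2, E21']; rewrite <- comp_assoc;
          [rewrite E11 | rewrite E21];
          rewrite ?comp_id_l, ?comp_id_r, ?comp_phz, ?phz_comp; reflexivity. }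
      rewrite <- comp_assoc, HM, comp_assoc, Hc1, Hq1, comp_id_l. reflexivity.
    - assert (HM : M ∘ s2 = s2' ∘ b).
      { apply (biprod_proj_ext Hbp'); rewrite !comp_assoc;
          [rewrite M1, E12' | rewrite M2, E22']; rewrite <- comp_assoc;
          [rewrite E12 | rewrite E22];
          rewrite ?comp_id_l, ?comp_id_r, ?comp_phz, ?phz_comp; reflexivity. }
      rewrite <- comp_assoc, HM, comp_assoc, Hc2, Hq2, comp_id_l. reflexivity. }
  rewrite <- Hq, <- comp_assoc.
  apply (phadd_codiag Hbp'); auto; rewrite comp_assoc;
    [rewrite M1, <- comp_assoc, Hp1 | rewrite M2, <- comp_assoc, Hp2]; reflexivity.
Qed.

Lemma phadd_0_l (W Y : Obj C) (g : Hom W Y) : phadd (phz W Y) g = g.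
Proof.
  destruct (ph_biprod Y Y) as (B&s1&r1&s2&r2&[Hbp _]).
  pose proof Hbp as (_&E22&_&E12&_).
  destruct (biprod_copair Hbp (idm Y) (idm Y)) as [c [Hc1 Hc2]].
  rewrite (phadd_codiag Hbp (p := s2 ∘ g) (c := c)); auto.
  - rewrite comp_assoc, Hc2, comp_id_l. reflexivity.
  - rewrite comp_assoc, E12, phz_comp. reflexivity.
  - rewrite comp_assoc, E22, comp_id_l. reflexivity.
Qed.

Lemma phadd_0_r (W Y : Obj C) (g : Hom W Y) : phadd g (phz W Y) = g.
Proof.
  destruct (ph_biprod Y Y) as (B&s1&r1&s2&r2&[Hbp _]).
  pose proof Hbp as (E11&_&E21&_&_).
  destruct (biprod_copair Hbp (idm Y) (idm Y)) as [c [Hc1 Hc2]].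
  rewrite (phadd_codiag Hbp (p := s1 ∘ g) (c := c)); auto.
  - rewrite comp_assoc, Hc1, comp_id_l. reflexivity.
  - rewrite comp_assoc, E11, comp_id_l. reflexivity.
  - rewrite comp_assoc, E21, phz_comp. reflexivity.
Qed.

Lemma comp_phadd_r (V W Y : Obj C) (f g : Hom W Y) (e : Hom V W) :
  phadd f g ∘ e = phadd (f ∘ e) (g ∘ e).
Proof.
  destruct (ph_biprod Y Y) as (B&s1&r1&s2&r2&[Hbp _]).
  destruct (biprod_copair Hbp (idm Y) (idm Y)) as [c [Hc1 Hc2]].
  destruct (biprod_pair Hbp f g) as [p [Hp1 Hp2]].
  rewrite (phadd_codiag Hbp Hp1 Hp2 Hc1 Hc2), <- comp_assoc.
  symmetry. apply (phadd_codiag Hbp); auto; rewrite comp_assoc; [rewrite Hp1 | rewrite Hp2];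
    reflexivity.
Qed.

Lemma comp_phadd_l (V W Y : Obj C) (f g : Hom W Y) (k : Hom Y V) :
  k ∘ phadd f g = phadd (k ∘ f) (k ∘ g).
Proof.
  destruct (ph_biprod Y Y) as (B&s1&r1&s2&r2&[Hbp _]).
  destruct (biprod_copair Hbp (idm Y) (idm Y)) as [c [Hc1 Hc2]].
  destruct (biprod_pair Hbp f g) as [p [Hp1 Hp2]].
  rewrite (phadd_codiag Hbp Hp1 Hp2 Hc1 Hc2), comp_assoc.
  symmetry. apply (phadd_matrix Hbp); auto; rewrite <- comp_assoc;
    [rewrite Hc1 | rewrite Hc2]; apply comp_id_r.
Qed.

(* Both sides equal [∇ ∘ M ∘ Δ] for the matrix [M = ((a, b), (c, d))]. *)
Lemma phadd_interchange (X Y : Obj C) (a b c d : Hom X Y) :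
  phadd (phadd a b) (phadd c d) = phadd (phadd a c) (phadd b d).
Proof.
  destruct (ph_biprod X X) as (B&s1&r1&s2&r2&[Hbp _]).
  destruct (ph_biprod Y Y) as (B'&s1'&r1'&s2'&r2'&[Hbp' _]).
  destruct (biprod_pair Hbp (idm X) (idm X)) as [diag [Hd1 Hd2]].
  destruct (biprod_copair Hbp' (idm Y) (idm Y)) as [codiag [Hn1 Hn2]].
  destruct (biprod_copair Hbp a b) as [ab [Hab1 Hab2]].
  destruct (biprod_copair Hbp c d) as [cd [Hcd1 Hcd2]].
  destruct (biprod_pair Hbp' ab cd) as [M [HM1 HM2]].
  assert (Hrow : forall (e f : Hom X Y) (ef : Hom B Y),
            ef ∘ s1 = e -> ef ∘ s2 = f -> phadd e f = ef ∘ diag).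
  { intros e f ef H1 H2. rewrite <- (comp_id_r _ _ _ e), <- (comp_id_r _ _ _ f).
    apply (phadd_matrix Hbp); assumption. }
  assert (Hcol : forall i : Hom X B, phadd (ab ∘ i) (cd ∘ i) = codiag ∘ (M ∘ i)).
  { intro i. apply (phadd_codiag Hbp'); auto; rewrite comp_assoc;
      [rewrite HM1 | rewrite HM2]; reflexivity. }
  rewrite (Hrow a b ab), (Hrow c d cd), Hcol by assumption.
  rewrite <- Hab1, <- Hcd1, <- Hab2, <- Hcd2, !Hcol.
  rewrite !comp_assoc. symmetry. apply Hrow; reflexivity.
Qed.

Lemma phadd_comm (X Y : Obj C) (f g : Hom X Y) : phadd f g = phadd g f.
Proof.
  pose proof (phadd_interchange (phz X Y) f g (phz X Y)) as H.
  rewrite !phadd_0_l, !phadd_0_r in H. exact H.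
Qed.

Lemma phadd_assoc (X Y : Obj C) (f g h : Hom X Y) :
  phadd f (phadd g h) = phadd (phadd f g) h.
Proof.
  pose proof (phadd_interchange f (phz X Y) g h) as H.
  rewrite phadd_0_l, phadd_0_r in H. exact H.
Qed.

Lemma star_phadd (X Y : Obj C) (f g : Hom X Y) :
  star (phadd f g) = phadd (star f) (star g).
Proof.
  destruct (ph_biprod Y Y) as (B&s1&r1&s2&r2&Hbp&->&->).
  destruct (biprod_copair Hbp (idm Y) (idm Y)) as [c [Hc1 Hc2]].
  destruct (biprod_pair Hbp f g) as [p [Hp1 Hp2]].
  rewrite (phadd_codiag Hbp Hp1 Hp2 Hc1 Hc2), star_comp.
  rewrite <- (comp_id_r _ _ _ (star f)), <- (comp_id_r _ _ _ (star g)).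
  symmetry. apply (phadd_matrix Hbp).
  - rewrite <- (star_star _ _ _ s1), <- star_comp, Hp1. reflexivity.
  - rewrite <- (star_star _ _ _ s2), <- star_comp, Hp2. reflexivity.
  - rewrite <- star_comp, Hc1, star_id. reflexivity.
  - rewrite <- star_comp, Hc2, star_id. reflexivity.
Qed.

Lemma phadd_star_comp_self (A X Y : Obj C) (x : Hom A X) (y : Hom A Y) :
  exists B (r1 : Hom B X) (w : Hom A B),
    r1 ∘ w = x /\ phadd (star x ∘ x) (star y ∘ y) = star w ∘ w.
Proof.
  destruct (ph_biprod X Y) as (B&s1&r1&s2&r2&Hbp&->&->).
  destruct (biprod_pair Hbp x y) as [w [Hw1 Hw2]].
  exists B, (star s1), w. split; [exact Hw1|].
  apply (phadd_matrix Hbp); auto;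
    rewrite <- (star_star _ _ _ (star w ∘ _)), star_comp, star_star; f_equal; assumption.
Qed.

(* [x] factors through the isometric kernel [m] of [x^*] as [x = m h], and then
   [h^* = h^* m^* m = x^* m = 0]. *)
Lemma star_comp_self_eq_0 (X Y : Obj C) (x : Hom X Y) :
  star x ∘ x = phz X X -> x = phz X Y.
Proof.
  intros Hx.
  destruct (ph_kernel (star x)) as (K&m&Hker&Hm).
  destruct (kernel_factor Hker Hx) as [h Hh].
  assert (Hh0 : star h = phz K X).
  { transitivity (star x ∘ m); [| exact (proj1 Hker)].
    rewrite <- Hh, star_comp, <- comp_assoc, Hm, comp_id_r. reflexivity. }
  rewrite <- Hh, <- (star_star _ _ _ h), Hh0, star_phz, comp_phz. reflexivity.
Qed.

End Enrichment.

Section DiagonalKernel.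

Variable C : PreHilbert.
Variables (X B Z N : Obj C) (s1 s2 diag : Hom X B) (g : Hom B Z) (k : Hom N B).
Hypothesis Hbp : is_biproduct (@phz C) s1 (star s1) s2 (star s2).
Hypotheses (Hd1 : star s1 ∘ diag = idm X) (Hd2 : star s2 ∘ diag = idm X).
Hypothesis Hg : is_kernel (@phz C) g diag.
Hypothesis Hk : is_kernel (@phz C) (star diag) k.
Hypothesis Hk_iso : star k ∘ k = idm N.

Local Notation k1 := (star s1 ∘ k).
Local Notation k2 := (star s2 ∘ k).

Lemma diag_kernel_components_sum : phadd k1 k2 = phz N X.
Proof.
  transitivity (star diag ∘ k); [| exact (proj1 Hk)].
  rewrite <- (comp_id_l _ _ _ k1), <- (comp_id_l _ _ _ k2).
  apply (phadd_matrix Hbp); try reflexivity;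
    rewrite <- (star_star _ _ _ (star diag ∘ _)), star_comp, star_star;
    [rewrite Hd1 | rewrite Hd2]; apply star_id.
Qed.

Lemma diag_kernel_components_isometry : phadd (star k1 ∘ k1) (star k2 ∘ k2) = idm N.
Proof.
  rewrite <- Hk_iso.
  apply (phadd_matrix Hbp); try reflexivity; rewrite star_comp, star_star; reflexivity.
Qed.

(* [g^*] factors through [k], so [k^* h = 0] forces [g h = 0], i.e. [h = <u, v>]
   factors through the diagonal. *)
Lemma diag_kernel_components_separate (W : Obj C) (u v : Hom W X) :
  phadd (star k1 ∘ u) (star k2 ∘ v) = phz W N -> u = v.
Proof.
  intros Huv.
  destruct (biprod_pair Hbp u v) as [h [Hh1 Hh2]].
  assert (Hkh : star k ∘ h = phz W N).
  { rewrite <- Huv. symmetry.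
    apply (phadd_matrix Hbp); auto; rewrite star_comp, star_star; reflexivity. }
  destruct (kernel_factor (u := star g) Hk) as [j Hj].
  { rewrite <- star_comp, (proj1 Hg). apply star_phz. }
  destruct (kernel_factor (u := h) Hg) as [w Hw].
  { rewrite <- (star_star _ _ _ g), <- Hj, star_comp, <- comp_assoc, Hkh. apply comp_phz. }
  rewrite <- Hh1, <- Hh2, <- Hw, !comp_assoc, Hd1, Hd2. reflexivity.
Qed.

Lemma diag_kernel_component_star_cancel (W : Obj C) (u v : Hom W X) :
  star k1 ∘ u = star k1 ∘ v -> u = v.
Proof.
  intros E. apply diag_kernel_components_separate.
  rewrite E, <- comp_phadd_r, <- star_phadd, diag_kernel_components_sum, star_phz.
  apply phz_comp.
Qed.

(* Both are additive inverses of [k2^* k1]. *)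
Lemma diag_kernel_components_norm : star k1 ∘ k1 = star k2 ∘ k2.
Proof.
  assert (H1 : phadd (star k1 ∘ k1) (star k2 ∘ k1) = phz N N).
  { rewrite <- comp_phadd_r, <- star_phadd, diag_kernel_components_sum, star_phz.
    apply phz_comp. }
  assert (H2 : phadd (star k2 ∘ k2) (star k2 ∘ k1) = phz N N).
  { rewrite <- comp_phadd_l, phadd_comm, diag_kernel_components_sum. apply comp_phz. }
  rewrite <- (phadd_0_r (star k1 ∘ k1)), <- H2, (phadd_comm (star k2 ∘ k2)), phadd_assoc, H1.
  apply phadd_0_l.
Qed.

Lemma diag_kernel_component_retraction : k1 ∘ phadd (star k1) (star k1) = idm X.
Proof.
  apply diag_kernel_component_star_cancel.
  rewrite comp_assoc, comp_phadd_l, <- comp_phadd_r.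
  rewrite diag_kernel_components_norm at 2.
  rewrite diag_kernel_components_isometry, comp_id_l, comp_id_r. reflexivity.
Qed.

End DiagonalKernel.

Lemma phadd_opp_idm (C : PreHilbert) (X : Obj C) :
  exists n : Hom X X, phadd (idm X) n = phz X X.
Proof.
  destruct (ph_biprod X X) as (B&s1&r1&s2&r2&Horth).
  pose proof Horth as (Hbp&Hr1&Hr2).
  destruct (biprod_pair Hbp (idm X) (idm X)) as [diag [Hd1 Hd2]].
  destruct (ph_diag Horth Hd1 Hd2) as (Z&g&Hg).
  destruct (ph_kernel (star diag)) as (N&k&Hk&Hk_iso).
  subst r1 r2.
  pose proof (diag_kernel_component_retraction Hbp Hd1 Hd2 Hg Hk Hk_iso) as Hret.
  eexists. rewrite <- Hret at 1.
  rewrite <- comp_phadd_r, (diag_kernel_components_sum Hbp Hd1 Hd2 Hk). apply phz_comp.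
Qed.

Lemma phadd_opp (C : PreHilbert) (W Y : Obj C) (f : Hom W Y) :
  exists g, phadd f g = phz W Y.
Proof.
  destruct (phadd_opp_idm Y) as [n Hn]. exists (n ∘ f).
  rewrite <- (comp_id_l _ _ _ f) at 1. rewrite <- comp_phadd_r, Hn. apply phz_comp.
Qed.

Definition is_hermitian_square (C : StarCategory) (A : Obj C) (a : Hom A A) : Prop :=
  exists (X : Obj C) (x : Hom A X), a = star x ∘ x.

Section HomModules.

Variables (C : PreHilbert) (A : Obj C).

Lemma phadd_abelian_group (X Y : Obj C) : is_abelian_group (phz X Y) (@phadd C X Y).
Proof.
  split; [|split; [|split]]; intros.
  - apply phadd_assoc.
  - apply phadd_comm.
  - apply phadd_0_l.
  - apply phadd_opp.
Qed.

Lemma endo_star_ring :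
  is_star_ring (phz A A) (idm A) (@phadd C A A) (fun r s : Hom A A => r ∘ s) (@star C A A).
Proof.
  split; [apply phadd_abelian_group|].
  repeat split; intros.
  - apply comp_assoc.
  - apply comp_id_l.
  - apply comp_id_r.
  - apply comp_phadd_l.
  - apply comp_phadd_r.
  - apply star_id.
  - apply star_comp.
  - apply star_star.
  - apply star_phadd.
Qed.

Lemma hermitian_square_positive_cone :
  is_positive_cone (phz A A) (idm A) (@phadd C A A) (fun r s : Hom A A => r ∘ s)
    (@star C A A) (@is_hermitian_square C A).
Proof.
  split; [|split; [|split; [|split]]].
  - intros a (X&x&->). rewrite star_comp, star_star. reflexivity.
  - exists A, (idm A). rewrite star_id, comp_id_l. reflexivity.
  - intros a b (X&x&->) (Y&y&->).
    destruct (phadd_star_comp_self x y) as (B&r1&w&_&Hw). exists B, w. exact Hw.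
  - intros r a (X&x&->). exists X, (x ∘ r). rewrite star_comp, !comp_assoc. reflexivity.
  - intros a b (X&x&->) (Y&y&->) Hab.
    destruct (phadd_star_comp_self x y) as (B&r1&w&Hw1&Hw).
    rewrite Hw in Hab. apply star_comp_self_eq_0 in Hab.
    rewrite <- Hw1, Hab, !comp_phz. reflexivity.
Qed.

Lemma hom_right_module (X : Obj C) :
  is_right_module (idm A) (@phadd C A A) (fun r s : Hom A A => r ∘ s)
    (phz A X) (@phadd C A X) (fun (x : Hom A X) (r : Hom A A) => x ∘ r).
Proof.
  split; [apply phadd_abelian_group|].
  repeat split; intros.
  - apply comp_phadd_r.
  - apply comp_phadd_l.
  - apply comp_assoc.
  - apply comp_id_r.
Qed.

Lemma hom_inner_product (X : Obj C) :
  is_inner_product (phz A A) (@phadd C A A) (fun r s : Hom A A => r ∘ s) (@star C A A)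
    (@is_hermitian_square C A) (phz A X) (@phadd C A X)
    (fun (x : Hom A X) (r : Hom A A) => x ∘ r) (fun x y : Hom A X => star x ∘ y).
Proof.
  split; [|split; [|split]].
  - intros x y z r. rewrite comp_phadd_l, comp_assoc. reflexivity.
  - intros x y. rewrite star_comp, star_star. reflexivity.
  - intros x. exists X, x. reflexivity.
  - intros x. apply star_comp_self_eq_0.
Qed.

End HomModules.

Lemma postcomp_adjoint (C : StarCategory) (A X Y : Obj C) (f : Hom X Y) :
  is_adjoint (fun x x' : Hom A X => star x ∘ x') (fun y y' : Hom A Y => star y ∘ y')
    (fun x : Hom A X => f ∘ x) (fun y : Hom A Y => star f ∘ y).
Proof. intros y x. rewrite star_comp, star_star, comp_assoc. reflexivity. Qed.

Unset Implicit Arguments.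

Theorem proposition5p12 (C : PreHilbert) (A : Obj C) :
  (* (1) C(A,A) is an ordered *-ring *)
  is_ordered_star_ring (@phz C A A) (idm A) (@phadd C A A)
    (fun r s : Hom A A => r ∘ s) (@star C A A)
    (fun a : Hom A A => exists (X : Obj C) (x : Hom A X), a = star x ∘ x)
  (* (2) each C(A,X) is an inner product right C(A,A)-module *)
  /\ (forall X : Obj C,
        is_inner_product_module (@phz C A A) (idm A) (@phadd C A A)
          (fun r s : Hom A A => r ∘ s) (@star C A A)
          (fun a : Hom A A => exists (Y : Obj C) (y : Hom A Y), a = star y ∘ y)
          (@phz C A X) (@phadd C A X)
          (fun (x : Hom A X) (r : Hom A A) => x ∘ r)
          (fun x y : Hom A X => star x ∘ y))
  (* (3) C(A,f) is adjointable with adjoint C(A,f^* ) *)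
  /\ (forall (X Y : Obj C) (f : Hom X Y),
        is_adjoint (fun x x' : Hom A X => star x ∘ x')
                   (fun y y' : Hom A Y => star y ∘ y')
                   (fun x : Hom A X => f ∘ x)
                   (fun y : Hom A Y => star f ∘ y))
  (* functoriality of X |-> C(A,X), f |-> C(A,f) *)
  /\ (forall (X : Obj C) (x : Hom A X), idm X ∘ x = x)
  /\ (forall (X Y Z : Obj C) (f : Hom X Y) (g : Hom Y Z) (x : Hom A X),
        (g ∘ f) ∘ x = g ∘ (f ∘ x)).
Proof.
  split; [|split; [|split; [|split]]].
  - split; [apply endo_star_ring|].
    split; [intro r; apply star_comp_self_eq_0 | apply hermitian_square_positive_cone].
  - intros X. split; [apply hom_right_module | apply hom_inner_product].
  - intros X Y f. apply postcomp_adjoint.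
  - intros X x. apply comp_id_l.
  - intros X Y Z f g x. symmetry. apply comp_assoc.
Qed.
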